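(* Let $X \subset \mathbb{R}^n$ be finite with at least $k+1$ points. Every element $(s,[x])$ of $\Gamma_{k}(X)$ has a unique largest branch point below it, i.e. there is a branch point $(s_{0},[x_{0}]) \leq (s,[x])$ such that every branch point $(t,[y]) \leq (s,[x])$ satisfies $(t,[y]) \leq (s_{0},[x_{0}])$.
   Context: $\mathbb{R}^n$ has Euclidean metric $d$. For $s\ge 0$, $V_s(X)$ is the Vietoris–Rips complex (vertex set $X$, simplices nonempty subsets with pairwise distances $\le s$), and for an integer $k\ge 0$, $L_{s,k}(X)$ is the full subcomplex of $V_s(X)$ on the vertices $x$ having at least $k$ points $x'\ne x$ of $X$ with $d(x,x')\le s$. $\Gamma_{k}(X)$ is the poset whose elements are pairs $(s,[x])$ with $s \in \mathbb{R}_{\geq 0}$ and $[x] \in \pi_{0}L_{s,k}(X)$, with $(s,[x]) \leq (t,[y])$ iff $s \leq t$ and the function $\pi_{0}L_{s,k}(X) \to \pi_{0}L_{t,k}(X)$ induced by inclusion sends $[x]$ to $[y]$. An element $(t,[x])$ of $\Gamma_{k}(X)$ is a branch point if either (1) there is $s_{0} < t$ such that for all $s$ with $s_{0} \leq s < t$ there are two distinct elements $(s,[x_{0}]) \neq (s,[x_{1}])$ with $(s,[x_{0}]) \leq (t,[x])$ and $(s,[x_{1}]) \leq (t,[x])$; or (2) there is no element $(s,[y])$ with $s<t$ and $(s,[y]) \leq (t,[x])$. *)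

From Stdlib Require Import Reals List Relations.
Import ListNotations.
Open Scope R_scope.

(* A point of R^n is a list of n reals (the length constraint is imposed
   in the theorem statement). *)
Definition point := list R.

Definition dist (x y : point) : R :=
  sqrt (fold_right Rplus 0 (map (fun p => (fst p - snd p) ^ 2) (combine x y))).

(* Vertices of L_{s,k}(X): points x of X having at least k points x' <> x
   of X with d(x,x') <= s. *)
Definition core (X : list point) (k : nat) (s : R) (x : point) : Prop :=
  In x X /\
  exists L : list point, NoDup L /\ length L = k /\
    forall y, In y L -> In y X /\ y <> x /\ dist x y <= s.

(* Edges of L_{s,k}(X) (1-simplices of the full subcomplex of V_s(X)). *)
Definition edge (X : list point) (k : nat) (s : R) (x y : point) : Prop :=
  core X k s x /\ core X k s y /\ dist x y <= s.

(* x and y are vertices of L_{s,k}(X) in the same path component,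
   i.e. [x] = [y] in pi_0 L_{s,k}(X). *)
Definition same_comp (X : list point) (k : nat) (s : R) (x y : point) : Prop :=
  core X k s x /\ core X k s y /\ clos_refl_trans point (edge X k s) x y.

(* (s,[x]) is an element of Gamma_k(X), represented by s and a vertex x. *)
Definition gelem (X : list point) (k : nat) (s : R) (x : point) : Prop :=
  0 <= s /\ core X k s x.

(* The order of Gamma_k(X): (s,[x]) <= (t,[y]) iff s <= t and the map
   pi_0 L_{s,k} -> pi_0 L_{t,k} induced by inclusion sends [x] to [y]. *)
Definition gle (X : list point) (k : nat) (s : R) (x : point) (t : R) (y : point) : Prop :=
  s <= t /\ same_comp X k t x y.

Definition branch_point (X : list point) (k : nat) (t : R) (x : point) : Prop :=
  (exists s0, s0 < t /\
     forall s, s0 <= s < t ->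
       exists x0 x1, gelem X k s x0 /\ gelem X k s x1 /\
         ~ same_comp X k s x0 x1 /\
         gle X k s x0 t x /\ gle X k s x1 t x)
  \/
  (~ exists s y, s < t /\ gelem X k s y /\ gle X k s y t x).

From Pilot Require Import Defs.
From Stdlib Require Import Reals List Relations Lra Classical.
Open Scope R_scope.

(* The complex L_{t,k}(X) only changes when t crosses one of the
   finitely many critical values: 0 and the pairwise distances of X.  Fix
   (s,[x]) and call a scale t <= s *unbranched* if the part of L_{t,k}(X)
   mapping into [x] at scale s is nonempty and, at every scale t' in [t,s],
   lies in a single path component.  The largest critical value <= s is
   unbranched, so there is a least unbranched critical value s0; let x0 be
   a vertex of L_{s0,k}(X) mapping into [x].
   - Any branch point (t,[y]) <= (s,[x]) has t <= s0: above an unbranched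
     scale nothing can merge and every element has a predecessor, so it is
     <= (s0,[x0]).
   - (s0,[x0]) is a branch point: if it has a predecessor, the largest
     critical value d' < s0 is not unbranched, which produces two distinct
     components at some scale of [d',s0); since the complexes are constant
     on [d',s0), these witness clause (1) of the definition.
   The file first collects the elementary facts about distances, components
   and how they vary with the scale, then finite extrema of critical values,
   and finally the two properties of s0 above. *)

Lemma dist_sym (x y : point) : Defs.dist x y = Defs.dist y x.
Proof.
  unfold Defs.dist; f_equal; revert y.
  induction x as [|a x IH]; intros [|b y]; simpl; auto.
  rewrite IH; f_equal; ring.
Qed.

Lemma dist_nonneg (x y : point) : 0 <= Defs.dist x y.
Proof. apply sqrt_pos. Qed.

Lemma clos_rt_mono {A} (R1 R2 : relation A) :
  inclusion A R1 R2 -> inclusion A (clos_refl_trans A R1) (clos_refl_trans A R2).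
Proof.
  intros HR a b H; induction H; [apply rt_step, HR | apply rt_refl | eapply rt_trans]; eauto.
Qed.

Lemma clos_rt_sym {A} (R : relation A) :
  symmetric A R -> symmetric A (clos_refl_trans A R).
Proof.
  intros HR a b H; induction H; [apply rt_step, HR | apply rt_refl | eapply rt_trans]; eauto.
Qed.

Lemma same_comp_refl X k t y : core X k t y -> same_comp X k t y y.
Proof. intros Hy; split; [| split]; auto; apply rt_refl. Qed.

Lemma same_comp_sym X k t y z : same_comp X k t y z -> same_comp X k t z y.
Proof.
  intros [Hy [Hz Hyz]]; split; [| split]; auto.
  revert Hyz; apply clos_rt_sym.
  intros a b [Ha [Hb Hab]]; split; [| split]; auto; rewrite dist_sym; auto.
Qed.

Lemma same_comp_trans X k t y z w :
  same_comp X k t y z -> same_comp X k t z w -> same_comp X k t y w.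
Proof. intros [Hy [_ Hyz]] [_ [Hw Hzw]]; split; [| split]; eauto using rt_trans. Qed.

(* [scale_incl X t1 t2]: every pair of points of X at distance <= t1 is at
   distance <= t2, so that L_{t1,k}(X) is a subcomplex of L_{t2,k}(X).  This
   covers both t1 <= t2 and scales not separated by a distance of X. *)
Definition scale_incl (X : list point) (t1 t2 : R) : Prop :=
  forall a b, In a X -> In b X -> Defs.dist a b <= t1 -> Defs.dist a b <= t2.

Lemma scale_incl_of_le X t1 t2 : t1 <= t2 -> scale_incl X t1 t2.
Proof. intros Ht a b _ _ Hab; lra. Qed.

Lemma core_incl X k t1 t2 y : scale_incl X t1 t2 -> core X k t1 y -> core X k t2 y.
Proof.
  intros Ht [Hy [L [Hnd [Hlen HL]]]]; split; auto; exists L; split; [| split]; auto.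
  intros z Hz; destruct (HL z Hz) as [? [? ?]]; split; [| split]; auto.
Qed.

Lemma same_comp_incl X k t1 t2 y z :
  scale_incl X t1 t2 -> same_comp X k t1 y z -> same_comp X k t2 y z.
Proof.
  intros Ht [Hy [Hz Hyz]]; split; [| split]; eauto using core_incl.
  revert Hyz; apply clos_rt_mono.
  intros a b [Ha [Hb Hab]]; split; [| split]; eauto using core_incl.
  apply Ht; auto; [destruct Ha | destruct Hb]; auto.
Qed.

Lemma same_comp_mono X k t1 t2 y z :
  t1 <= t2 -> same_comp X k t1 y z -> same_comp X k t2 y z.
Proof. intros Ht; apply same_comp_incl, scale_incl_of_le, Ht. Qed.

Definition crit (X : list point) : list R :=
  0 :: map (fun p => Defs.dist (fst p) (snd p)) (list_prod X X).

Lemma crit_dist X a b : In a X -> In b X -> In (Defs.dist a b) (crit X).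
Proof. intros Ha Hb; right; apply in_map_iff; exists (a, b); split; auto; apply in_prod; auto. Qed.

Lemma crit_nonneg X d : In d (crit X) -> 0 <= d.
Proof.
  intros [<- | Hd]; [lra |].
  apply in_map_iff in Hd; destruct Hd as [[a b] [<- _]]; apply dist_nonneg.
Qed.

Lemma scale_incl_gap X t1 t2 c :
  (forall d, In d (crit X) -> d <= t1 -> d <= c) -> c <= t2 -> scale_incl X t1 t2.
Proof. intros Hc Hct a b Ha Hb Hab; specialize (Hc _ (crit_dist X a b Ha Hb) Hab); lra. Qed.

Lemma finite_extremum (le : R -> R -> Prop)
  (le_total : forall a b, le a b \/ le b a)
  (le_trans : forall a b c, le a b -> le b c -> le a c)
  (L : list R) (Q : R -> Prop) :
  (exists d, In d L /\ Q d) ->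
  exists m, In m L /\ Q m /\ forall d, In d L -> Q d -> le m d.
Proof.
  assert (le_refl : forall a, le a a) by (intros a; destruct (le_total a a); auto).
  induction L as [|a L IH]; intros [d [Hd Hq]]; [destruct Hd |].
  destruct (classic (exists d, In d L /\ Q d)) as [HL | HL].
  - destruct (IH HL) as [m [Hm [Hqm Hext]]].
    destruct (classic (Q a /\ le a m)) as [[Hqa Ham] | Hno].
    + exists a; split; [left |]; auto; split; auto.
      intros e [<- | He] Hqe; eauto.
    + exists m; split; [right |]; auto; split; auto.
      intros e [<- | He] Hqe; auto.
      destruct (le_total m a); auto; exfalso; auto.
  - destruct Hd as [<- | Hd]; [| exfalso; eauto].
    exists a; split; [left |]; auto; split; auto.
    intros e [<- | He] Hqe; [| exfalso]; eauto.
Qed.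

Lemma crit_max X (Q : R -> Prop) :
  (exists d, In d (crit X) /\ Q d) ->
  exists m, In m (crit X) /\ Q m /\ forall d, In d (crit X) -> Q d -> d <= m.
Proof.
  intros H; destruct (finite_extremum Rge ltac:(intros; lra) ltac:(intros; lra) _ Q H)
    as [m [? [? Hm]]].
  exists m; repeat split; auto; intros d ? ?; apply Rge_le; auto.
Qed.

Lemma crit_min X (Q : R -> Prop) :
  (exists d, In d (crit X) /\ Q d) ->
  exists m, In m (crit X) /\ Q m /\ forall d, In d (crit X) -> Q d -> m <= d.
Proof. apply finite_extremum; intros; lra. Qed.

Section Unbranched.

Variables (X : list point) (k : nat) (s : R) (x : point).

Definition fibre (t : R) (y : point) : Prop := core X k t y /\ same_comp X k s y x.

Definition unbranched (t : R) : Prop :=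
  0 <= t /\ t <= s /\ (exists y, fibre t y) /\
  forall t', t <= t' <= s -> forall y z, fibre t' y -> fibre t' z -> same_comp X k t' y z.

Hypothesis Hx : gelem X k s x.

(* Above the last critical value below s nothing changes, so that scale is
   unbranched; hence a least unbranched critical value exists. *)
Lemma least_unbranched_crit :
  exists s0, In s0 (crit X) /\ unbranched s0 /\
    forall d, In d (crit X) -> unbranched d -> s0 <= d.
Proof.
  destruct Hx as [Hs Hcx].
  destruct (crit_max X (fun d => d <= s)) as [dm [HdmX [Hdms Hdm]]].
  { exists 0; split; [left |]; auto. }
  assert (Hflat : forall t', dm <= t' <= s -> scale_incl X s t')
    by (intros t' Ht'; apply (scale_incl_gap X s t' dm); auto; lra).
  apply crit_min; exists dm; split; auto.
  split; [apply (crit_nonneg X); auto |]; split; auto; split.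
  - exists x; split; [apply (core_incl X k s) | apply same_comp_refl]; auto; apply Hflat; lra.
  - intros t' Ht' y z [_ Hyx] [_ Hzx]; apply (same_comp_incl X k s); [apply Hflat; auto |].
    eapply same_comp_trans; eauto using same_comp_sym.
Qed.

Variables (s0 : R) (x0 : point).
Hypotheses (Hunb : unbranched s0) (Hx0 : fibre s0 x0).

Lemma fibre_below_x0 t y : s0 <= t <= s -> fibre t y -> same_comp X k t y x0.
Proof.
  intros Ht Hy; destruct Hunb as [_ [_ [_ Hconn]]]; apply Hconn; auto.
  destruct Hx0 as [Hc0 ?]; split; auto; apply (core_incl X k s0); auto.
  apply scale_incl_of_le; lra.
Qed.

(* Every branch point below (s,[x]) is below (s0,[x0]): at scales above s0
   the fibre neither splits nor acquires new points. *)
Lemma branch_point_below t y :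
  gelem X k t y -> branch_point X k t y -> gle X k t y s x -> gle X k t y s0 x0.
Proof.
  intros [Ht Hcy] Hbr [Hts Hyx].
  assert (Hs0s : s0 <= s) by apply Hunb.
  assert (Hfib : forall r z, core X k r z -> same_comp X k t z y -> fibre r z).
  { intros r z Hz Hzy; split; auto.
    apply same_comp_trans with y; auto; apply (same_comp_mono X k t); auto. }
  destruct (Rle_or_lt t s0) as [Hle | Hlt].
  - split; auto; apply fibre_below_x0; [lra |]; split; auto.
    apply (core_incl X k t); auto; apply scale_incl_of_le; auto.
  - exfalso; destruct Hbr as [[s1 [Hs1 Hsplit]] | Hnopred].
    + (* at a scale r in [s0,t) the fibre would have two components *)
      set (r := Rmax s1 s0).
      assert (Hr : s1 <= r /\ s0 <= r < t)
        by (unfold r; split; [apply Rmax_l | split; [apply Rmax_r | apply Rmax_lub_lt; auto]]).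
      destruct (Hsplit r) as [a [b [[_ Ha] [[_ Hb] [Hab [[_ Hay] [_ Hby]]]]]]]; [lra |].
      apply Hab, same_comp_trans with x0; [| apply same_comp_sym];
        apply fibre_below_x0; auto; lra.
    + (* (s0,[x0]) would be a predecessor of (t,[y]) *)
      destruct Hunb as [Hs0 [_ [_ Hconn]]]; destruct Hx0 as [Hc0 Hx0x].
      apply Hnopred; exists s0, x0; split; [| split; [split |]]; auto.
      split; [lra |]; apply Hconn; [lra | | split]; auto.
      split; auto; apply (core_incl X k s0); auto; apply scale_incl_of_le; lra.
Qed.

Lemma split_of_not_unbranched t :
  0 <= t <= s -> (exists y, fibre t y) -> ~ unbranched t ->
  exists t' y z, t <= t' <= s /\ fibre t' y /\ fibre t' z /\ ~ same_comp X k t' y z.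
Proof.
  intros Ht Hne Hnot; apply NNPP; intros Hnosplit; apply Hnot.
  split; [lra |]; split; [lra |]; split; auto.
  intros t' Ht' y z Hy Hz; apply NNPP; intros Hyz; apply Hnosplit; eauto 10.
Qed.

Hypothesis Hmin : forall d, In d (crit X) -> unbranched d -> s0 <= d.

(* If s0 is the least unbranched critical value, (s0,[x0]) is a branch point:
   either it has no predecessor, or the fibre is split on a whole interval
   [d',s0) on which the complexes do not change. *)
Lemma least_unbranched_branch_point : branch_point X k s0 x0.
Proof.
  destruct (classic (exists t y, t < s0 /\ gelem X k t y /\ gle X k t y s0 x0))
    as [[t [y [Hts0 [[Ht Hcy] [_ Hyx0]]]]] | Hnopred]; [left | right; auto].
  destruct (crit_max X (fun d => d < s0)) as [d' [Hd'X [Hd's0 Hd']]].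
  { exists 0; split; [left |]; auto; lra. }
  assert (Hflat : forall r1 r2, r1 < s0 -> d' <= r2 -> scale_incl X r1 r2).
  { intros r1 r2 Hr1 Hr2; apply (scale_incl_gap X r1 r2 d'); auto.
    intros d Hd Hdr; apply Hd'; auto; lra. }
  assert (Hd'0 : 0 <= d') by (apply (crit_nonneg X); auto).
  assert (Hs0s : s0 <= s) by apply Hunb.
  assert (Hy : fibre d' y).
  { split; [apply (core_incl X k t); auto; apply Hflat; lra |].
    apply same_comp_trans with x0; [apply (same_comp_mono X k s0) | apply Hx0]; auto. }
  destruct (split_of_not_unbranched d') as [t' [y' [z' [Ht' [Hy' [Hz' Hy'z']]]]]];
    [lra | eauto | intros Hunb'; specialize (Hmin d' Hd'X Hunb'); lra |].
  assert (Ht's0 : t' < s0).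
  { destruct (Rlt_or_le t' s0) as [? | Hle]; auto; exfalso; apply Hy'z'.
    apply same_comp_trans with x0; [| apply same_comp_sym]; apply fibre_below_x0; auto; lra. }
  assert (Hup : forall z, fibre t' z -> same_comp X k s0 z x0).
  { intros z [Hz Hzx]; apply fibre_below_x0; [lra |]; split; auto.
    apply (core_incl X k t'); auto; apply scale_incl_of_le; lra. }
  exists d'; split; auto; intros r Hr; exists y', z'.
  split; [split; [lra | apply (core_incl X k t'); [apply Hflat |]; [lra | lra | apply Hy']] |].
  split; [split; [lra | apply (core_incl X k t'); [apply Hflat |]; [lra | lra | apply Hz']] |].
  split; [intros Hc; apply Hy'z', (same_comp_incl X k r); auto; apply Hflat; lra |].
  split; split; auto; lra.
Qed.

End Unbranched.

Theorem lemma11 (n k : nat) (X : list point)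
  (HXn : forall x, In x X -> length x = n)
  (HXnd : NoDup X)
  (HXk : (k + 1 <= length X)%nat)
  (s : R) (x : point) (Hel : gelem X k s x) :
  exists s0 x0,
    gelem X k s0 x0 /\ branch_point X k s0 x0 /\ gle X k s0 x0 s x /\
    forall t y, gelem X k t y -> branch_point X k t y -> gle X k t y s x ->
      gle X k t y s0 x0.
Proof.
  destruct (least_unbranched_crit X k s x Hel) as [s0 [_ [Hunb Hmin]]].
  pose proof Hunb as [Hs0 [Hs0s [[x0 Hx0] _]]].
  exists s0, x0; split; [split; [auto | apply Hx0] |].
  split; [apply (least_unbranched_branch_point X k s x); auto |].
  split; [split; [auto | apply Hx0] |].
  intros t y; apply (branch_point_below X k s x); auto.
Qed.
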